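(* Let $G$ be a finite group and $U,V\leq G\times G$ with $\Delta(G)\leq U$ and $\Delta(G)\leq V$. Then $$\frac{k_1((U\ast V)')}{k_1(U)\cap k_1((U\ast V)')}\cong\frac{k_1(V')}{k_2(U)\cap k_1(V')}$$ and $$\frac{k_2((U\ast V)')}{k_2(V)\cap k_2((U\ast V)')}\cong\frac{k_2(U')}{k_1(V)\cap k_2(U')}.$$
   Context: $\Delta(G)=\{(g,g):g\in G\}$. For $W\leq G\times G$: $p_1(W)=\{g:\exists h,(g,h)\in W\}$, $p_2(W)=\{h:\exists g,(g,h)\in W\}$, $k_1(W)=\{g:(g,1)\in W\}$, $k_2(W)=\{h:(1,h)\in W\}$; $W'$ is the commutator subgroup of $W$. The $\ast$-product is $U\ast V=\{(u,v)\in p_1(U)\times p_2(V):\exists x\in p_2(U)\cap p_1(V),\ (u,x)\in U,\ (x,v)\in V\}$. *)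

From mathcomp Require Import all_boot all_fingroup all_solvable.
Set Implicit Arguments. Unset Strict Implicit. Unset Printing Implicit Defensive.
Local Open Scope group_scope.

Section BisetDefs.
Variable gT : finGroupType.
Implicit Types (G : {set gT}) (W U V : {set gT * gT}).

Definition diag G : {set gT * gT} := [set (g, g) | g in G].
Definition p1 W : {set gT} := [set g | [exists h, (g, h) \in W]].
Definition p2 W : {set gT} := [set h | [exists g, (g, h) \in W]].
Definition k1 W : {set gT} := [set g | (g, 1) \in W].
Definition k2 W : {set gT} := [set h | (1, h) \in W].
Definition astp U V : {set gT * gT} :=
  [set uv | [&& uv.1 \in p1 U, uv.2 \in p2 V &
     [exists x, [&& x \in p2 U :&: p1 V, (uv.1, x) \in U & (x, uv.2) \in V]]]].
End BisetDefs.

From mathcomp Require Import all_boot all_fingroup all_solvable.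
Set Implicit Arguments. Unset Strict Implicit. Unset Printing Implicit Defensive.
Local Open Scope group_scope.

(** A subgroup [W] of [G × G] containing [Δ(G)] is the graph of congruence
    modulo the normal subgroup [N = k1 W = k2 W] of [G], and the star product
    of the graphs modulo [N] and [M] is the graph modulo [N M].  The derived
    subgroup of the graph modulo [N] has both kernels equal to [[N, G]].  So
    with [N = k1 U], [M = k1 V], the first isomorphism compares [X / (N ∩ X)]
    for [X = [N M, G] = [N, G] [M, G]] and [X = [M, G]]; since [[N, G] ≤ N]
    both have [X N = [M, G] N], and the second isomorphism theorem identifies
    both with [[M, G] N / N].  The second isomorphism is the mirror image. *)

Section Bisets.
Variable gT : finGroupType.
Implicit Types (G H N M : {group gT}) (W : {group gT * gT}).

Lemma mul_pair (a b c d : gT) : ((a, b) * (c, d) : gT * gT) = (a * c, b * d).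
Proof. by []. Qed.

Lemma conj_pair (a b c d : gT) : ((a, b) ^ (c, d) : gT * gT) = (a ^ c, b ^ d).
Proof. by []. Qed.

Lemma comm_pair (a b c d : gT) :
  ([~ (a, b), (c, d)] : gT * gT) = ([~ a, c], [~ b, d]).
Proof. by []. Qed.

Fact k1_group_set W : group_set (k1 W).
Proof.
apply/group_setP; split=> [|x y]; rewrite !inE ?group1 // => Wx Wy.
by have := groupM Wx Wy; rewrite mul_pair mulg1.
Qed.
Canonical k1_group W := Group (k1_group_set W).

Fact k2_group_set W : group_set (k2 W).
Proof.
apply/group_setP; split=> [|x y]; rewrite !inE ?group1 // => Wx Wy.
by have := groupM Wx Wy; rewrite mul_pair mulg1.
Qed.
Canonical k2_group W := Group (k2_group_set W).

Definition pairs_mod (G H : {set gT}) : {set gT * gT} :=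
  [set w | [&& w.1 \in G, w.2 \in G & w.1 * w.2^-1 \in H]].

Lemma mem_pairs_mod (G H : {set gT}) a b :
  ((a, b) \in pairs_mod G H) = [&& a \in G, b \in G & a * b^-1 \in H].
Proof. by rewrite inE. Qed.

Lemma pairs_mod_group_set G H : G \subset 'N(H) -> group_set (pairs_mod G H).
Proof.
move=> nHG; apply/group_setP; split=> [|[a b] [c d]].
  by rewrite /pairs_mod inE /= invg1 mulg1 !group1.
rewrite mul_pair !mem_pairs_mod => /and3P[Ga Gb Hab] /and3P[Gc Gd Hcd].
have -> : a * c * (b * d)^-1 = (a * b^-1) * (c * d^-1) ^ b^-1.
  by rewrite /conjg invgK invMg !mulgA mulgKV.
rewrite (groupM Ga Gc) (groupM Gb Gd) groupM //.
by rewrite memJ_norm // (subsetP nHG) ?groupV.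
Qed.

Lemma p1_pairs_mod G H : p1 (pairs_mod G H) = G.
Proof.
apply/setP=> g; rewrite inE; apply/existsP/idP => [[h]|Gg].
  by rewrite mem_pairs_mod => /and3P[].
by exists g; rewrite mem_pairs_mod Gg mulgV group1.
Qed.

Lemma p2_pairs_mod G H : p2 (pairs_mod G H) = G.
Proof.
apply/setP=> g; rewrite inE; apply/existsP/idP => [[h]|Gg].
  by rewrite mem_pairs_mod => /and3P[].
by exists g; rewrite mem_pairs_mod Gg mulgV group1.
Qed.

Lemma k1_pairs_mod G H : H \subset G -> k1 (pairs_mod G H) = H.
Proof.
move=> sHG; apply/setP=> g; rewrite inE mem_pairs_mod group1 invg1 mulg1.
by apply/and3P/idP => [[] // | Hg]; rewrite (subsetP sHG).
Qed.

Lemma k2_pairs_mod G H : H \subset G -> k2 (pairs_mod G H) = H.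
Proof.
move=> sHG; apply/setP=> g; rewrite inE mem_pairs_mod group1 mul1g groupV.
by apply/and3P/idP => [[] // | Hg]; rewrite (subsetP sHG).
Qed.

Lemma k1_sub_pairs_mod G H (W : {set gT * gT}) :
  W \subset pairs_mod G H -> k1 W \subset H.
Proof.
move=> sWGH; apply/subsetP=> g; rewrite inE => /(subsetP sWGH).
by rewrite mem_pairs_mod invg1 mulg1 => /and3P[].
Qed.

Lemma k2_sub_pairs_mod G H (W : {set gT * gT}) :
  W \subset pairs_mod G H -> k2 W \subset H.
Proof.
move=> sWGH; apply/subsetP=> g; rewrite inE => /(subsetP sWGH).
by rewrite mem_pairs_mod mul1g groupV => /and3P[].
Qed.

Section DiagonalSubgroups.
Variables (G : {group gT}) (W : {group gT * gT}).
Hypotheses (sWGG : W \subset setX G G) (sDW : diag G \subset W).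

Lemma diag_mem g : g \in G -> (g, g) \in W.
Proof. by move=> Gg; rewrite (subsetP sDW) ?imset_f. Qed.

Lemma pairs_modE : gval W = pairs_mod G (k1 W).
Proof.
apply/setP=> -[a b]; rewrite mem_pairs_mod inE.
apply/idP/and3P => [Wab | [_ Gb Wab']].
  have /setXP[Ga Gb] := subsetP sWGG _ Wab; split=> //.
  by have := groupM Wab (diag_mem (groupVr Gb)); rewrite mul_pair mulgV.
by have := groupM Wab' (diag_mem Gb); rewrite mul_pair mul1g mulgKV.
Qed.

Lemma k1_normal : k1 W <| G.
Proof.
apply/andP; split.
  by apply/subsetP=> g; rewrite inE => /(subsetP sWGG)/setXP[].
apply/subsetP=> g Gg; rewrite inE; apply/subsetP=> _ /imsetP[n + ->]; rewrite !inE => Wn.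
by rewrite -[1](conj1g g) -conj_pair groupJ ?diag_mem.
Qed.

End DiagonalSubgroups.

Lemma astp_pairs_mod G N M : N <| G -> M <| G ->
  astp (pairs_mod G N) (pairs_mod G M) = pairs_mod G (N <*> M).
Proof.
move=> /andP[sNG nNG] /andP[sMG _].
rewrite norm_joinEr ?(subset_trans sMG nNG) // /astp !p1_pairs_mod !p2_pairs_mod.
apply/setP=> -[u v]; rewrite !inE /=.
apply/and3P/and3P => [[Gu Gv /existsP[x]] | [Gu Gv /mulsgP[n m Nn Mm uv]]].
  rewrite !inE /= => /and5P[/andP[Gx _] /and3P[_ _ Nux] _ _ Mxv].
  split=> //; have -> : u * v^-1 = (u * x^-1) * (x * v^-1) by rewrite !mulgA mulgKV.
  exact: mem_mulg.
split=> //; apply/existsP; exists (n^-1 * u).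
have Gx : n^-1 * u \in G by rewrite groupM ?groupV ?(subsetP sNG _ Nn).
rewrite !inE /= Gx Gu Gv invMg invgK mulgA mulgV mul1g Nn.
by rewrite -mulgA uv mulKg Mm.
Qed.

Section DerivedPairsMod.
Variables (G N : {group gT}).
Hypothesis nsNG : N <| G.

Local Canonical pairs_mod_group := Group (pairs_mod_group_set (normal_norm nsNG)).

(* (a, b) |-> a b^-1 [N, G] is a morphism into the abelian group N / [N, G]
   because N is central modulo [N, G]. *)
Lemma der1_pairs_mod_sub : (pairs_mod G N)^`(1) \subset pairs_mod G [~: N, G].
Proof.
have [sNG nNG] := andP nsNG; set K := [~: N, G].
have nKG : G \subset 'N(K) by rewrite normsRr.
pose f (w : gT * gT) := coset K (w.1 * w.2^-1).
have fM : {in pairs_mod G N &, {morph f : x y / x * y}}.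
  move=> [a b] [c d]; rewrite !mem_pairs_mod => /and3P[Ga Gb Nab] /and3P[Gc Gd Ncd].
  rewrite /f mul_pair /=.
  have -> : a * c * (b * d)^-1 = (a * b^-1) * ((c * d^-1) * [~ c * d^-1, b^-1]).
    by rewrite -conjg_mulR /conjg invgK invMg !mulgA mulgKV.
  by rewrite mulgA coset_kerr ?mem_commg ?groupV // morphM ?(subsetP nKG) ?groupM ?groupV.
pose fm := Morphism fM.
have abNK : abelian (N / K) by rewrite sub_der1_abelian ?commgS.
have fW' : fm @* (pairs_mod G N)^`(1) = 1.
  rewrite morphim_der //; apply/derG1P; apply: abelianS abNK.
  apply/subsetP=> _ /morphimP[[a b] _ + ->]; rewrite mem_pairs_mod => /and3P[_ _ Nab].
  exact: mem_quotient.
apply/subsetP=> -[a b] W'ab; have Wab := subsetP (der1_subG pairs_mod_group) _ W'ab.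
have /set1P fab : fm (a, b) \in [1] by rewrite -fW' mem_morphim.
move: Wab; rewrite !mem_pairs_mod => /and3P[Ga Gb _]; rewrite Ga Gb.
by apply: coset_idr fab; rewrite (subsetP nKG) ?groupM ?groupV.
Qed.

Lemma commg_mem_der1_pairs_mod n g : n \in N -> g \in G ->
  ([~ n, g], 1) \in (pairs_mod G N)^`(1) /\ (1, [~ n, g]) \in (pairs_mod G N)^`(1).
Proof.
move=> Nn Gg; have Gn := subsetP (normal_sub nsNG) _ Nn.
rewrite -[1](comm1g g) -!comm_pair; split; apply: mem_commg;
  by rewrite mem_pairs_mod ?mulgV ?invg1 ?mulg1 ?mul1g ?groupV ?group1 ?Gn ?Gg.
Qed.

Lemma k1_der1_pairs_mod : k1 ((pairs_mod G N)^`(1)) = [~: N, G].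
Proof.
apply/eqP; rewrite eqEsubset (k1_sub_pairs_mod der1_pairs_mod_sub) /=.
rewrite gen_subG; apply/subsetP=> _ /imset2P[n g Nn Gg ->].
by rewrite inE; case: (commg_mem_der1_pairs_mod Nn Gg).
Qed.

Lemma k2_der1_pairs_mod : k2 ((pairs_mod G N)^`(1)) = [~: N, G].
Proof.
apply/eqP; rewrite eqEsubset (k2_sub_pairs_mod der1_pairs_mod_sub) /=.
rewrite gen_subG; apply/subsetP=> _ /imset2P[n g Nn Gg ->].
by rewrite inE; case: (commg_mem_der1_pairs_mod Nn Gg).
Qed.

End DerivedPairsMod.

Lemma quotient_meet_isog (A B N : {group gT}) :
    A \subset 'N(N) -> B \subset 'N(N) -> A * N = B * N ->
  A / (N :&: A) \isog B / (N :&: B).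
Proof.
move=> nNA nNB eqAB; apply: isog_trans (second_isog nNA) _.
rewrite /= -quotientMidr eqAB quotientMidr isog_sym.
exact: second_isog.
Qed.

Lemma commg_joing_isog G N M : N <| G -> M <| G ->
  [~: N <*> M, G] / (N :&: [~: N <*> M, G]) \isog [~: M, G] / (N :&: [~: M, G]).
Proof.
move=> /andP[sNG nNG] /andP[sMG nMG].
have nNcommG H : H \subset G -> [~: H, G] \subset 'N(N).
  by move=> sHG; rewrite (subset_trans _ nNG) // commg_subr (subset_trans sHG).
have commYG : [~: N <*> M, G] = [~: N, G] * [~: M, G].
  by rewrite norm_joinEr ?(subset_trans sMG nNG) // commMG // normsRr.
apply: quotient_meet_isog; rewrite ?nNcommG ?join_subG ?sNG //=.
have sRN : [~: N, G] \subset N by rewrite commg_subl.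
by rewrite commYG -mulgA (normC (nNcommG _ sMG)) mulgA (mulSGid sRN).
Qed.

End Bisets.

Theorem lemma5p5 (gT : finGroupType) (G : {group gT}) (U V : {group gT * gT}) :
  U \subset setX G G -> V \subset setX G G ->
  diag G \subset U -> diag G \subset V ->
  (k1 ((astp U V)^`(1)) / (k1 U :&: k1 ((astp U V)^`(1)))
     \isog k1 (V^`(1)) / (k2 U :&: k1 (V^`(1))))
  /\
  (k2 ((astp U V)^`(1)) / (k2 V :&: k2 ((astp U V)^`(1)))
     \isog k2 (U^`(1)) / (k1 V :&: k2 (U^`(1)))).
Proof.
move=> sUGG sVGG sDU sDV.
have nsNG := k1_normal sUGG sDU; have nsMG := k1_normal sVGG sDV.
rewrite (pairs_modE sUGG sDU) (pairs_modE sVGG sDV) astp_pairs_mod //.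
rewrite !k1_der1_pairs_mod ?k2_der1_pairs_mod ?normalY //.
rewrite k1_pairs_mod ?k2_pairs_mod ?k1_pairs_mod ?normal_sub //.
split; first exact: commg_joing_isog.
by rewrite /= joingC; apply: commg_joing_isog.
Qed.
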